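(* If $P\subset\mathbb R^d$ is a rational $d$-polytope with $N(P)=-N(P)$, then $\Lambda_P=\Delta_P$, i.e. every upper region of $\Lambda_P$ is an open cell of $\Delta_P$ and conversely.
   Context: A rational $d$-polytope has a unique irredundant presentation $P=\bigcap_{i=1}^m\{\bm x:(\bm a_i,\bm x)\ge b_i\}$ with $(\bm a_i,b_i)\in\mathbb Z^{d+1}$ primitive; $N(P)=\{\bm a_1,\dots,\bm a_m\}$. Upper regions: nonempty sets $U_{\bm c}=\{\bm x: c_i-1<(\bm a_i,\bm x)\le c_i\ \forall i\}$, $\bm c\in\mathbb Z^m$; $\Lambda_P$ is the set of them. $\Delta_P$: the open cells of the arrangement $\{(\bm a_i,\bm x)=k: i\le m, k\in\mathbb Z\}$, i.e. nonempty sets $A_1\cap\cdots\cap A_m$ with each $A_i$ either $\{(\bm a_i,\bm x)=k\}$ or $\{k<(\bm a_i,\bm x)<k+1\}$, $k\in\mathbb Z$. *)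

From HB Require Import structures.
From mathcomp Require Import all_boot all_order all_algebra.
From mathcomp Require Import boolp classical_sets reals.
Set Implicit Arguments. Unset Strict Implicit. Unset Printing Implicit Defensive.
Import Order.TTheory GRing.Theory Num.Theory.
Local Open Scope ring_scope.
Local Open Scope classical_set_scope.

Definition dotZ {R : realType} {d : nat} (a : 'I_d -> int) (x : 'I_d -> R) : R :=
  \sum_(j < d) (a j)%:~R * x j.

Definition primitive {d : nat} (a : 'I_d -> int) (b : int) : Prop :=
  forall k : int, (forall j, (k %| a j)%Z) -> (k %| b)%Z -> `|k| = 1.

Definition polyhedron {R : realType} {d m : nat}
  (A : 'I_m -> 'I_d -> int) (b : 'I_m -> int) : set ('I_d -> R) :=
  [set x | forall i, (b i)%:~R <= dotZ (A i) x].

Definition irredundant {R : realType} {d m : nat}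
  (A : 'I_m -> 'I_d -> int) (b : 'I_m -> int) : Prop :=
  forall i, exists x : 'I_d -> R,
    (forall j, j != i -> (b j)%:~R <= dotZ (A j) x) /\ dotZ (A i) x < (b i)%:~R.

Definition bounded {R : realType} {d : nat} (P : set ('I_d -> R)) : Prop :=
  exists M : R, forall x, P x -> forall j, `|x j| <= M.

Definition full_dimensional {R : realType} {d : nat} (P : set ('I_d -> R)) : Prop :=
  exists (x0 : 'I_d -> R) (e : R), 0 < e /\
    forall y : 'I_d -> R, (forall j, `|y j - x0 j| < e) -> P y.

Definition rational_polytope_presentation {R : realType} {d m : nat}
  (P : set ('I_d -> R)) (A : 'I_m -> 'I_d -> int) (b : 'I_m -> int) : Prop :=
  [/\ P = polyhedron A b, forall i, primitive (A i) (b i), irredundant (R:=R) A b,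
      bounded P & full_dimensional P].

Definition normals {d m : nat} (A : 'I_m -> 'I_d -> int) : set ('I_d -> int) :=
  [set a | exists i, a = A i].
Definition neg_set {d : nat} (S : set ('I_d -> int)) : set ('I_d -> int) :=
  [set a | S (fun j => - a j)].

Definition upper_region {R : realType} {d m : nat}
  (A : 'I_m -> 'I_d -> int) (c : 'I_m -> int) : set ('I_d -> R) :=
  [set x | forall i, (c i)%:~R - 1 < dotZ (A i) x /\ dotZ (A i) x <= (c i)%:~R].

Definition Lambda {R : realType} {d m : nat} (A : 'I_m -> 'I_d -> int)
  : set (set ('I_d -> R)) :=
  [set U | exists c, U = upper_region A c /\ U !=set0].

(* Open cell of the arrangement {(a_i,x) = k}: s i selects the hyperplane
   (a_i,x) = k i, otherwise the open slab k i < (a_i,x) < k i + 1. *)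
Definition arr_cell {R : realType} {d m : nat}
  (A : 'I_m -> 'I_d -> int) (s : 'I_m -> bool) (k : 'I_m -> int) : set ('I_d -> R) :=
  [set x | forall i, if s i then dotZ (A i) x = (k i)%:~R
                     else (k i)%:~R < dotZ (A i) x /\ dotZ (A i) x < (k i)%:~R + 1].

Definition Delta {R : realType} {d m : nat} (A : 'I_m -> 'I_d -> int)
  : set (set ('I_d -> R)) :=
  [set U | exists s k, U = arr_cell A s k /\ U !=set0].

From HB Require Import structures.
From mathcomp Require Import all_boot all_order all_algebra.
From mathcomp Require Import boolp classical_sets reals.
From mathcomp Require Import lra.
Import Order.TTheory GRing.Theory Num.Theory.
Local Open Scope ring_scope.
Local Open Scope classical_set_scope.

(* Everything happens one normal at a time on the real line.  For a value
   t = (a_i, x), membership in an upper region asks  c - 1 < t <= c  (the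
   "upper condition"), membership in a cell asks  t = k  or  k < t < k + 1
   (the "cell condition").  Every cell condition implies an upper condition.
   When -a_i is also a normal a_j, a point lies in U_c iff for each i the
   pair t, -t meets the upper conditions for c_i, c_j; by integrality such a
   pair of conditions, once satisfiable, is equivalent to a single cell
   condition (t = c_i if c_j = -c_i, else c_i - 1 < t < c_i).  Finally,
   cells of the integer grid on the line are disjoint, so a cell condition
   is determined by any point satisfying it. *)

Lemma ltr_int_addr1 (R : realType) (p q : int) :
  (p%:~R : R) < q%:~R + 1 -> (p%:~R : R) <= q%:~R.
Proof.
move=> h; have : (p%:~R : R) < (q + 1)%:~R by rewrite intrD.
by rewrite ltr_int ler_int -ltzD1.
Qed.

Lemma dotZN (R : realType) (d : nat) (a : 'I_d -> int) (x : 'I_d -> R) :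
  dotZ (fun t => - a t) x = - dotZ a x.
Proof. by rewrite /dotZ -sumrN; apply: eq_bigr => t _; rewrite mulrNz mulNr. Qed.

Section LineConditions.
Context {R : realType}.

Definition upper_cond (c : int) (t : R) : Prop := c%:~R - 1 < t /\ t <= c%:~R.

Definition cell_cond (s : bool) (k : int) (t : R) : Prop :=
  if s then t = k%:~R else k%:~R < t /\ t < k%:~R + 1.

Definition cell_top (s : bool) (k : int) : int := if s then k else k + 1.

Lemma cell_cond_upper {s k t} : cell_cond s k t -> upper_cond (cell_top s k) t.
Proof.
rewrite /cell_cond /upper_cond /cell_top; case: s => [->|]; first lra.
by rewrite intrD; lra.
Qed.

(* Cells of the integer grid on the line are pairwise disjoint, so two
   cell conditions sharing a solution are the same condition. *)
Lemma cell_cond_same {s k s' k' t} :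
  cell_cond s k t -> cell_cond s' k' t -> forall u, cell_cond s' k' u -> cell_cond s k u.
Proof.
move=> h h'; suff [-> ->] : s = s' /\ k = k' by [].
rewrite /cell_cond in h h'.
suff E : (k%:~R : R) = k'%:~R.
  have Ek : k = k' by apply/eqP; rewrite -(eqr_int R) E.
  by subst k'; split=> //; case: s s' h h' => -[] //= => [->|] []; lra.
have := @ltr_int_addr1 R k k'; have := @ltr_int_addr1 R k' k.
by case: s h; case: s' h' => /=; lra.
Qed.

(* Upper conditions for t and -t, when satisfiable, amount to a single cell
   condition: the point t0 witnesses which one. *)
Lemma upper_pair_cell {ci cj : int} {t0 : R} :
  upper_cond ci t0 -> upper_cond cj (- t0) ->
  forall t, upper_cond ci t /\ upper_cond cj (- t) <->
            cell_cond (t0 == ci%:~R) (if t0 == ci%:~R then ci else ci - 1) t.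
Proof.
rewrite /upper_cond /cell_cond => -[h1 h2] [h3 h4] t.
case: eqP => [e0|ne0].
  have Ecj : cj%:~R = - ci%:~R :> R.
    have := @ltr_int_addr1 R cj (- ci); have := @ltr_int_addr1 R (- ci) cj.
    rewrite !intrN; lra.
  rewrite Ecj; lra.
have lt0 : t0 < ci%:~R by rewrite lt_neqAle h2 andbT; apply/eqP.
have Ecj : cj%:~R = 1 - ci%:~R :> R.
  have := @ltr_int_addr1 R cj (1 - ci); have := @ltr_int_addr1 R (1 - ci) cj.
  rewrite !intrB ?mulr1z; lra.
rewrite Ecj intrB ?mulr1z; lra.
Qed.

End LineConditions.

Lemma arr_cell_sub_upper {R : realType} {d m : nat} {A : 'I_m -> 'I_d -> int}
    {s : 'I_m -> bool} {k : 'I_m -> int} :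
  arr_cell (R:=R) A s k `<=` upper_region A (fun i => cell_top (s i) (k i)).
Proof. by move=> x Hx i; exact: cell_cond_upper (Hx i). Qed.

Section SymmetricNormals.
Variables (R : realType) (d m : nat) (A : 'I_m -> 'I_d -> int).

Hypothesis normal_opp : forall i, exists j, A j = (fun t => - A i t).

Lemma upper_region_opp {c : 'I_m -> int} {x : 'I_d -> R} {i j : 'I_m} :
  A j = (fun t => - A i t) -> upper_region A c x ->
  upper_cond (c i) (dotZ (A i) x) /\ upper_cond (c j) (- dotZ (A i) x).
Proof. by move=> hj Hx; split; [exact: Hx i | rewrite -dotZN -hj; exact: Hx j]. Qed.

(* A nonempty upper region U_c is the cell of any of its points y:
   (a_i, x) = c_i where (a_i, y) = c_i, and c_i - 1 < (a_i, x) < c_i elsewhere. *)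
Lemma Lambda_sub_Delta : Lambda (R:=R) A `<=` Delta A.
Proof.
move=> _ [c [-> [y Hy]]].
pose s i := dotZ (A i) y == (c i)%:~R.
pose k i := if s i then c i else c i - 1.
exists s, k; split; last by exists y.
apply/seteqP; split => x Hx i; have [j hj] := normal_opp i;
  have [hy1 hy2] := upper_region_opp hj Hy.
- exact: (upper_pair_cell hy1 hy2 _).1 (upper_region_opp hj Hx).
- exact: ((upper_pair_cell hy1 hy2 _).2 (Hx i)).1.
Qed.

(* A nonempty cell is the upper region of its upper conditions: a point of
   that region satisfies the same cell condition as any point of the cell,
   since both are determined by the same pair of upper conditions. *)
Lemma Delta_sub_Lambda : Delta (R:=R) A `<=` Lambda A.
Proof.
move=> _ [s [k [-> [y Hy]]]].
exists (fun i => cell_top (s i) (k i)); split; last by exists y.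
apply/seteqP; split; first exact: arr_cell_sub_upper.
move=> x Hx i; have [j hj] := normal_opp i.
have [hy1 hy2] := upper_region_opp hj (arr_cell_sub_upper _ Hy).
have cell_y := (upper_pair_cell hy1 hy2 _).1 (conj hy1 hy2).
have cell_x := (upper_pair_cell hy1 hy2 _).1 (upper_region_opp hj Hx).
exact: cell_cond_same (Hy i) cell_y _ cell_x.
Qed.

End SymmetricNormals.

Theorem mainTheorem6 (R : realType) (d m : nat) (P : set ('I_d -> R))
  (A : 'I_m -> 'I_d -> int) (b : 'I_m -> int) :
  rational_polytope_presentation P A b ->
  normals A = neg_set (normals A) ->
  Lambda (R:=R) A = Delta (R:=R) A.
Proof.
(* Only the symmetry of the normals matters, not the polytope itself. *)
move=> _ symN.
have normal_opp i : exists j, A j = (fun t => - A i t).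
  have : normals A (A i) by exists i.
  by rewrite symN => -[j hj]; exists j.
by apply/seteqP; split; [exact: Lambda_sub_Delta | exact: Delta_sub_Lambda].
Qed.
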